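(* Let $A=\{a_1,\ldots,a_n\}$ and $B=\{b_1,\ldots,b_m\}$ be finite point sets in $\mathbb{R}^2$ with $m\le n$, and let $\mathcal{D}_{B,A}$ be their partial-matching subdivision. Then every edge of $\mathcal{D}_{B,A}$ has a normal vector of the form $a_j-a_i$ for suitable $i\neq j\in\{1,\ldots,n\}$.
   Context: An injective assignment (matching) is an injective map $\pi:B\to A$; write $a_{\pi(i)}$ for the point assigned to $b_i$. For a translation $t\in\mathbb{R}^2$ its cost is $f(\pi,t)=\sum_{i=1}^m\|b_i+t-a_{\pi(i)}\|^2=c_\pi+\langle t,d_\pi\rangle+m\|t\|^2$, where $c_\pi=\sum_{i=1}^m\|b_i-a_{\pi(i)}\|^2$ and $d_\pi=2\sum_{i=1}^m(b_i-a_{\pi(i)})$. The partial-matching subdivision $\mathcal{D}_{B,A}$ is the subdivision of the plane in which two translations $t_1,t_2$ lie in the same region iff the set of injections minimizing $f(\cdot,t)$ is the same at $t_1$ and $t_2$; equivalently, it is the minimization diagram (projection onto the $t$-plane) of the lower envelope $\mathcal{E}_{B,A}(t)=\min_{\pi}(c_\pi+\langle t,d_\pi\rangle)$ of finitely many planes. It is a convex subdivision of the plane into convex polygonal regions (open two-dimensional faces), edges and vertices. *)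

From mathcomp Require Import all_boot all_order all_algebra.
From mathcomp Require Import reals.
Set Implicit Arguments. Unset Strict Implicit. Unset Printing Implicit Defensive.
Import Order.TTheory GRing.Theory Num.Theory.
Local Open Scope ring_scope.

Section Defs.
Variable R : realType.
Notation pt := (R * R)%type.

Definition padd (p q : pt) : pt := (p.1 + q.1, p.2 + q.2).
Definition psub (p q : pt) : pt := (p.1 - q.1, p.2 - q.2).
Definition pscale (s : R) (p : pt) : pt := (s * p.1, s * p.2).
Definition dot (p q : pt) : R := p.1 * q.1 + p.2 * q.2.
Definition sqnorm (p : pt) : R := dot p p.

Variables (n m : nat) (A : 'I_n -> pt) (B : 'I_m -> pt).

Definition cost (pi : {ffun 'I_m -> 'I_n}) (t : pt) : R :=
  \sum_(i < m) sqnorm (psub (padd (B i) t) (A (pi i))).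

Definition is_opt (t : pt) (pi : {ffun 'I_m -> 'I_n}) : Prop :=
  injective pi /\
  forall sigma : {ffun 'I_m -> 'I_n}, injective sigma -> cost pi t <= cost sigma t.

(* the face (cell) of the partial-matching subdivision containing t0:
   all translations with the same set of optimal injections as t0 *)
Definition cell (t0 t : pt) : Prop :=
  forall pi : {ffun 'I_m -> 'I_n}, is_opt t pi <-> is_opt t0 pi.

Definition is_edge_cell (t0 : pt) : Prop :=
  (exists t1 t2, cell t0 t1 /\ cell t0 t2 /\ t1 <> t2) /\
  (exists v : pt, v <> (0, 0) /\
     forall t, cell t0 t -> exists s : R, t = padd t0 (pscale s v)).

End Defs.

From mathcomp Require Import all_boot all_order all_algebra.
From mathcomp Require Import reals ring lra.
From Stdlib Require Import Classical.
Set Implicit Arguments. Unset Strict Implicit. Unset Printing Implicit Defensive.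
Import Order.TTheory GRing.Theory Num.Theory.
Local Open Scope ring_scope.

(* If two matchings pi, sigma optimal at t0 use different points of A, an
   alternating path of pi and sigma starting at an index i0 whose pi-value is
   unused by sigma yields injections tau, rho that recombine pi and sigma,
   where tau arises from pi by trading a_{pi(i0)} for some a_j unused by pi.
   Since pi and sigma stay optimal on the whole cell and
   f(tau) + f(rho) = f(pi) + f(sigma), also f(tau) = f(pi) on the cell; the
   difference f(tau) - f(pi) is affine in t with gradient 2(a_{pi(i0)} - a_j),
   so a_j - a_{pi(i0)} is normal to the cell.
   Otherwise all optimal matchings at t0 use the same points of A, so their
   costs agree to first order in every direction, while the finitely many
   non-optimal ones are strictly worse; a small step orthogonal to the line
   containing the cell then stays in the cell, which is absurd. *)

Section Exchange.
Variables (I J : finType) (V : nmodType).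

Definition ffun_set (f : {ffun I -> J}) (i : I) (k : J) : {ffun I -> J} :=
  [ffun x => if x == i then k else f x].

Lemma ffun_setE (f : {ffun I -> J}) i k x :
  ffun_set f i k x = if x == i then k else f x.
Proof. by rewrite ffunE. Qed.

Lemma ffun_set_inj (f : {ffun I -> J}) i k :
  injective f -> (forall x, x != i -> f x != k) -> injective (ffun_set f i k).
Proof.
move=> f_inj fk x y; rewrite !ffun_setE.
case: eqVneq => [->|hx]; case: eqVneq => [->|hy] //.
- by move=> e; move: (fk y hy); rewrite e eqxx.
- by move=> e; move: (fk x hx); rewrite e eqxx.
- exact: f_inj.
Qed.

Lemma sum_ffun_set (W : J -> V) (f : {ffun I -> J}) i k :
  \sum_x W (ffun_set f i k x) + W (f i) = \sum_x W (f x) + W k.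
Proof.
rewrite (bigD1 i) // [in RHS](bigD1 i) //= ffun_setE eqxx.
rewrite (eq_bigr (fun x => W (f x))) => [|x /negbTE hx]; last by rewrite ffun_setE hx.
by rewrite addrAC [in RHS]addrAC [W (f i) + _]addrC.
Qed.

Lemma sum_codom_eq (W : J -> V) (f g : I -> J) :
  injective f -> injective g -> codom f =i codom g ->
  \sum_x W (f x) = \sum_x W (g x).
Proof.
move=> f_inj g_inj fg.
have sum_codom h : \sum_x W (h x) = \sum_(k <- codom h) W k.
  by rewrite codomE big_map big_enum.
have uniq_codom h : injective h -> uniq (codom h).
  by move=> h_inj; rewrite codomE map_inj_uniq ?enum_uniq.
by rewrite !sum_codom; apply/perm_big/uniq_perm; rewrite ?uniq_codom.
Qed.

Definition recombination (pi sigma tau rho : {ffun I -> J}) : Prop :=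
  forall x, (tau x = pi x /\ rho x = sigma x) \/ (tau x = sigma x /\ rho x = pi x).

(* [tau] and [rho] arise by swapping [pi] and [sigma] along an alternating
   path starting at [i0]; in [tau] the value [pi i0] is traded for a value [j]
   unused by [pi]. *)
Definition exchange_pair (pi sigma : {ffun I -> J}) (i0 : I)
    (tau rho : {ffun I -> J}) : Prop :=
  [/\ injective tau, injective rho, recombination pi sigma tau rho,
      tau i0 = sigma i0 &
      exists2 j, j \notin codom pi &
        forall W : J -> V, \sum_x W (tau x) + W (pi i0) = \sum_x W (pi x) + W j].

Lemma exchange_pair_last (pi sigma : {ffun I -> J}) i0 :
  injective pi -> injective sigma ->
  pi i0 \notin codom sigma -> sigma i0 \notin codom pi ->
  exchange_pair pi sigma i0 (ffun_set pi i0 (sigma i0)) (ffun_set sigma i0 (pi i0)).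
Proof.
move=> pi_inj sigma_inj /codomP pi_i0 /codomP sigma_i0; split.
- apply: ffun_set_inj => // x _; apply/eqP => e; apply: sigma_i0; by exists x.
- apply: ffun_set_inj => // x _; apply/eqP => e; apply: pi_i0; by exists x.
- by move=> x; rewrite !ffun_setE; case: eqP => [->|_]; [right|left].
- by rewrite ffun_setE eqxx.
- by exists (sigma i0) => [|W]; [apply/codomP | rewrite sum_ffun_set].
Qed.

Lemma exchange_pair_cons (pi sigma : {ffun I -> J}) i0 i1 :
  injective pi -> injective sigma -> pi i0 \notin codom sigma ->
  sigma i0 = pi i1 ->
  (exists tau rho, exchange_pair pi (ffun_set sigma i0 (pi i0)) i1 tau rho) ->
  exists tau rho, exchange_pair pi sigma i0 tau rho.
Proof.
move=> pi_inj sigma_inj /codomP pi_i0 e_i1.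
move=> [tau [rho [tau_inj rho_inj rec tau_i1 [j j_new sumW]]]].
have sigma_i0 : sigma i0 != pi i0 by apply/eqP => e; apply: pi_i0; exists i0.
have i10 : i1 != i0 by apply: contra_neq sigma_i0 => e; rewrite e_i1 e.
have tau_i0 : tau i0 = pi i0 by case: (rec i0) => -[-> _]; rewrite // ffun_setE eqxx.
exists (ffun_set tau i0 (sigma i0)), rho; split => //.
- apply: ffun_set_inj => // x x0; case: (eqVneq x i1) => [->|x1].
    by rewrite tau_i1 ffun_setE (negbTE i10) (inj_eq sigma_inj).
  case: (rec x) => -[-> _]; first by rewrite e_i1 (inj_eq pi_inj).
  by rewrite ffun_setE (negbTE x0) (inj_eq sigma_inj).
- move=> x; rewrite ffun_setE; case: eqVneq => [->|x0].
    by right; split => //; case: (rec i0) => -[_ ->]; rewrite ?ffun_setE ?eqxx.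
  by case: (rec x); rewrite ffun_setE (negbTE x0); [left|right].
- by rewrite ffun_setE eqxx.
- exists j => // W; rewrite -tau_i0 sum_ffun_set e_i1; exact: sumW.
Qed.

Lemma exists_exchange_pair (pi sigma : {ffun I -> J}) i0 :
  injective pi -> injective sigma -> pi i0 \notin codom sigma ->
  exists tau rho, exchange_pair pi sigma i0 tau rho.
Proof.
move=> pi_inj; have [d] := ubnP #|[pred x | pi x != sigma x]|.
elim: d sigma i0 => // d IH sigma i0 lt_d sigma_inj pi_i0.
case/boolP: (sigma i0 \in codom pi) => [/codomP [i1 e_i1]|sigma_i0]; last first.
  by do 2!eexists; exact: exchange_pair_last.
apply: exchange_pair_cons (e_i1) _ => //.
have sigma'_inj : injective (ffun_set sigma i0 (pi i0)).
  apply: ffun_set_inj => // x _; apply: contraNneq pi_i0 => <-; exact: codom_f.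
apply: IH => //.
  rewrite -ltnS; apply: leq_trans lt_d; rewrite ltnS; apply: proper_card.
  apply/properP; split.
    apply/subsetP => x; rewrite !inE ffun_setE; case: (eqVneq x i0) => [->|//].
    by rewrite eqxx.
  exists i0; last by rewrite inE ffun_setE !eqxx.
  by rewrite inE; apply: contraNneq pi_i0 => ->; exact: codom_f.
apply/codomP => -[x]; rewrite -e_i1 ffun_setE.
case: (eqVneq x i0) => [_ e|x0 /sigma_inj e].
  by move: pi_i0; rewrite -e codom_f.
by move: x0; rewrite e eqxx.
Qed.

End Exchange.

Lemma exists_small_perturbation_pos (R : realFieldType) (T : finType) (P : pred T)
    (f g : T -> R) :
  (forall x, P x -> 0 < f x) ->
  exists2 e, 0 < e & forall x, P x -> 0 < f x + e * g x.
Proof.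
move=> f_gt0.
pose M := \sum_(x | P x) `|g x| / f x.
have ratio_ge0 x : P x -> 0 <= `|g x| / f x.
  by move=> Px; rewrite divr_ge0 ?normr_ge0 ?ltW ?f_gt0.
have M_ge0 : 0 <= M by apply: sumr_ge0.
have M1_gt0 : 0 < M + 1 by lra.
exists (M + 1)^-1 => [|x Px]; first by rewrite invr_gt0.
have fx_gt0 := f_gt0 x Px.
have : `|g x| / f x <= M.
  by rewrite /M (bigD1 x) //= lerDl; apply: sumr_ge0 => y /andP [Py _]; exact: ratio_ge0.
rewrite ler_pdivrMr // => gx_le.
have := ler_norm (- g x); rewrite normrN => ngx_le.
have -> : f x + (M + 1)^-1 * g x = (M + 1)^-1 * ((M + 1) * f x + g x).
  by rewrite mulrDr mulrA mulVf ?mul1r // gt_eqF.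
by rewrite mulr_gt0 ?invr_gt0 //; lra.
Qed.

Section PartialMatching.
Variables (R : realType) (n m : nat).
Variables (A : 'I_n -> (R * R)%type) (B : 'I_m -> (R * R)%type).

Local Notation cost := (cost A B).
Local Notation is_opt := (is_opt A B).
Local Notation cell := (cell A B).

Lemma exists_is_opt t : (m <= n)%N -> exists pi, is_opt t pi.
Proof.
move=> mn; pose f0 : {ffun 'I_m -> 'I_n} := [ffun i => widen_ord mn i].
have f0_inj : injectiveb f0.
  by apply/injectiveP => x y; rewrite !ffunE => /(congr1 val) /= /val_inj.
have [pi /injectiveP pi_inj pi_min] :=
  arg_minP (P := [pred s : {ffun _ -> _} | injectiveb s]) (fun s => cost s t) f0_inj.
by exists pi; split=> // sigma /injectiveP; exact: pi_min.
Qed.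

Lemma cost_recombination (pi sigma tau rho : {ffun 'I_m -> 'I_n}) t :
  recombination pi sigma tau rho ->
  cost tau t + cost rho t = cost pi t + cost sigma t.
Proof.
move=> rec; rewrite /cost -!big_split /=; apply: eq_bigr => i _.
by case: (rec i) => -[-> ->]; rewrite // addrC.
Qed.

Lemma cost_recombination_opt (pi sigma tau rho : {ffun 'I_m -> 'I_n}) t :
  is_opt t pi -> is_opt t sigma -> injective tau -> injective rho ->
  recombination pi sigma tau rho -> cost tau t = cost pi t.
Proof.
move=> [_ pi_min] [_ sigma_min] tau_inj rho_inj rec.
have := pi_min _ tau_inj; have := sigma_min _ rho_inj.
have := cost_recombination t rec; lra.
Qed.

Lemma cost_sub_cost (x y : {ffun 'I_m -> 'I_n}) t1 t2 :
  (cost x t1 - cost y t1) - (cost x t2 - cost y t2) =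
  2 * (\sum_i dot (A (y i)) (psub t1 t2) - \sum_i dot (A (x i)) (psub t1 t2)).
Proof.
rewrite /cost -!sumrB mulr_sumr; apply: eq_bigr => i _.
rewrite /sqnorm /dot /psub /padd /=; ring.
Qed.

Definition cost_slope (x : {ffun 'I_m -> 'I_n}) t u : R :=
  \sum_i 2 * dot (psub (padd (B i) t) (A (x i))) u.

Lemma cost_along (x : {ffun 'I_m -> 'I_n}) t u e :
  cost x (padd t (pscale e u)) =
  cost x t + e * cost_slope x t u + e ^+ 2 * \sum_(i < m) sqnorm u.
Proof.
rewrite /cost /cost_slope !mulr_sumr -!big_split; apply: eq_bigr => i _.
rewrite /sqnorm /dot /psub /padd /pscale /=; ring.
Qed.

Lemma cost_slope_codom (x y : {ffun 'I_m -> 'I_n}) t u :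
  injective x -> injective y -> codom x =i codom y ->
  cost_slope x t u = cost_slope y t u.
Proof.
move=> x_inj y_inj xy.
have slopeE z : cost_slope z t u =
    \sum_i 2 * dot (padd (B i) t) u - \sum_i 2 * dot (A (z i)) u.
  by rewrite /cost_slope -sumrB; apply: eq_bigr => i _; rewrite /dot /psub /padd /=; ring.
by rewrite !slopeE (sum_codom_eq (fun k => 2 * dot (A k) u) x_inj y_inj xy).
Qed.

Lemma cell_normal_of_exchange t0 (pi sigma : {ffun 'I_m -> 'I_n}) i0 :
  is_opt t0 pi -> is_opt t0 sigma -> pi i0 \notin codom sigma ->
  exists2 j, j != pi i0 &
    forall t1 t2, cell t0 t1 -> cell t0 t2 ->
      dot (psub (A j) (A (pi i0))) (psub t1 t2) = 0.
Proof.
move=> pi_opt sigma_opt pi_i0.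
have [tau [rho [tau_inj rho_inj rec _ [j j_new sumW]]]] :=
  exists_exchange_pair R pi_opt.1 sigma_opt.1 pi_i0.
exists j => [|t1 t2 cell1 cell2].
  by apply: contraNneq j_new => ->; exact: codom_f.
have cost_tau t : cell t0 t -> cost tau t = cost pi t.
  by move=> ct; apply: (cost_recombination_opt _ _ tau_inj rho_inj rec); apply/ct.
have := cost_sub_cost tau pi t1 t2; rewrite !cost_tau // !subrr.
have := sumW (fun k => dot (A k) (psub t1 t2)).
rewrite /dot /psub /=; lra.
Qed.

Lemma cell_contains_perturbation t0 u : (m <= n)%N ->
  (forall pi sigma, is_opt t0 pi -> is_opt t0 sigma ->
     {subset codom pi <= codom sigma}) ->
  exists2 e, 0 < e & cell t0 (padd t0 (pscale e u)).
Proof.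
move=> mn same_codom; have [pi0 pi0_opt] := exists_is_opt t0 mn.
have opt_cost pi : is_opt t0 pi -> cost pi t0 = cost pi0 t0.
  by move=> pi_opt; have := pi_opt.2 _ pi0_opt.1; have := pi0_opt.2 _ pi_opt.1; lra.
have opt_slope pi : is_opt t0 pi -> cost_slope pi t0 u = cost_slope pi0 t0 u.
  move=> pi_opt; apply: cost_slope_codom pi_opt.1 pi0_opt.1 _ => k.
  by apply/idP/idP; apply: same_codom.
pose P := [pred s : {ffun 'I_m -> 'I_n} | injectiveb s && (cost pi0 t0 < cost s t0)].
have gap_pos s : P s -> 0 < cost s t0 - cost pi0 t0.
  by case/andP => _; rewrite subr_gt0.
have [e e_gt0 P_pos] := exists_small_perturbation_pos
  (fun s => cost_slope s t0 u - cost_slope pi0 t0 u) gap_pos.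
exists e => // pi; set t := padd t0 (pscale e u).
have opt_cost_t s : is_opt t0 s -> cost s t = cost pi0 t.
  by move=> s_opt; rewrite /t !cost_along opt_cost ?opt_slope.
have cost_gap (s : {ffun _ -> _}) : injective s -> ~ is_opt t0 s -> cost pi0 t < cost s t.
  move=> s_inj s_opt; have /P_pos : P s.
    rewrite inE; apply/andP; split; first exact/injectiveP.
    rewrite ltNge; apply/negP => s_le; apply: s_opt; split=> // sigma sigma_inj.
    exact: le_trans s_le (pi0_opt.2 _ sigma_inj).
  rewrite /t !cost_along; lra.
split=> [pi_opt | pi_opt]; last first.
  split=> [|s s_inj]; first exact: pi_opt.1.
  rewrite opt_cost_t //; have [/opt_cost_t -> //|] := classic (is_opt t0 s).
  by move/(cost_gap s s_inj)/ltW.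
apply: NNPP => pi_nopt; have := cost_gap pi pi_opt.1 pi_nopt.
by rewrite ltNge (pi_opt.2 _ pi0_opt.1).
Qed.

End PartialMatching.

Lemma perp_translate_neq (R : realType) (t v : (R * R)%type) e s :
  v <> (0, 0) -> e != 0 -> padd t (pscale e (- v.2, v.1)) <> padd t (pscale s v).
Proof.
case: v => a b /= ab0 e0; rewrite /padd /pscale /= => -[/addrI h1 /addrI h2].
have : e * (a ^+ 2 + b ^+ 2) = 0.
  have -> : e * (a ^+ 2 + b ^+ 2) = a * (e * a) - b * (e * - b) by ring.
  by rewrite h1 h2; ring.
move/eqP; rewrite mulf_eq0 (negbTE e0) /= paddr_eq0 ?sqr_ge0 // !sqrf_eq0.
by case/andP => /eqP a0 /eqP b0; apply: ab0; rewrite a0 b0.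
Qed.

Theorem lemma2 (R : realType) (n m : nat)
  (A : 'I_n -> (R * R)%type) (B : 'I_m -> (R * R)%type)
  (hA : injective A) (hB : injective B) (hmn : (m <= n)%N)
  (t0 : (R * R)%type) :
  is_edge_cell A B t0 ->
  exists i j : 'I_n, i <> j /\
    forall t1 t2, cell A B t0 t1 -> cell A B t0 t2 ->
      dot (psub (A j) (A i)) (psub t1 t2) = 0.
Proof.
move=> [_ [v [v_neq0 in_line]]].
have [[pi [sigma [i0 [pi_opt sigma_opt pi_i0]]]] | no_exchange] := classic
  (exists pi sigma i0,
     [/\ is_opt A B t0 pi, is_opt A B t0 sigma & pi i0 \notin codom sigma]).
  have [j j_neq orth] := cell_normal_of_exchange pi_opt sigma_opt pi_i0.
  by exists (pi i0), j; split => //; apply/eqP; rewrite eq_sym.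
have same_codom pi sigma : is_opt A B t0 pi -> is_opt A B t0 sigma ->
    {subset codom pi <= codom sigma}.
  move=> pi_opt sigma_opt _ /codomP [i ->]; apply/negPn/negP => pi_i.
  by apply: no_exchange; exists pi, sigma, i.
have [e e_gt0 cell_e] := cell_contains_perturbation (- v.2, v.1) hmn same_codom.
have [s] := in_line _ cell_e.
by move/(perp_translate_neq v_neq0 (lt0r_neq0 e_gt0)).
Qed.
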